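(* Let $n\ge2$, $d\ge2$ and $\mathbf{m}=(d-1,1,0,\ldots,0)\in\mathbb{N}^n$ (any $\mathbf{m}$ with $|\mathbf{m}|=d$ and $\max(\mathbf{m})=d-1$ is of this form up to permuting coordinates). Then \[\mathcal{A}_{n,d}\setminus\mathcal{A}_{n,d,\mathbf{m}}=\begin{cases}\{(2s+1,2t+1,0,\ldots,0): s,t\in\mathbb{N}\} & \text{if } d=2,\\ \{(ds-1,1,0,\ldots,0): s\ge1\} & \text{if } d>2.\end{cases}\]
   Context: For $\mathbf{a}\in\mathbb{N}^n$, $|\mathbf{a}|=\sum_i a_i$ and $\max(\mathbf{a})=\max_i a_i$. $T_{n,d}=\{\mathbf{a}\in\mathbb{N}^n:|\mathbf{a}|=d\}$; $\mathcal{A}_{n,d}$ is the (additive) semigroup generated by $T_{n,d}$; for $\mathbf{m}\in T_{n,d}$, $\mathcal{A}_{n,d,\mathbf{m}}$ is the semigroup generated by $T_{n,d}\setminus\{\mathbf{m}\}$. *)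

From mathcomp Require Import all_boot.

Unset Strict Implicit.
Unset Printing Implicit Defensive.

Definition vecN (n : nat) := {ffun 'I_n -> nat}.

Definition vnorm1 (n : nat) (a : vecN n) : nat := \sum_(i < n) a i.

Definition vzero (n : nat) : vecN n := [ffun _ => 0].
Definition vadd (n : nat) (a b : vecN n) : vecN n := [ffun i => a i + b i].

(* The additive semigroup generated by a set G of vectors: all finite sums
   of elements of G (the empty sum 0 included; this does not affect the
   set difference considered below since 0 lies in every such semigroup). *)
Inductive in_semigroup (n : nat) (G : vecN n -> Prop) : vecN n -> Prop :=
| sg_zero : in_semigroup n G (vzero n)
| sg_add : forall g a, G g -> in_semigroup n G a -> in_semigroup n G (vadd n g a).

Definition T_nd (n d : nat) (a : vecN n) : Prop := vnorm1 n a = d.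

Definition A_nd (n d : nat) : vecN n -> Prop := in_semigroup n (T_nd n d).

Definition A_ndm (n d : nat) (m : vecN n) : vecN n -> Prop :=
  in_semigroup n (fun a => T_nd n d a /\ a <> m).

Definition vec2 (n x y : nat) : vecN n :=
  [ffun i : 'I_n => if nat_of_ord i == 0 then x
                    else if nat_of_ord i == 1 then y else 0].

From mathcomp Require Import all_boot zify.

(* A vector lies in A_{n,d} iff d divides its norm: greedily peel off
   sub-vectors of norm d. The same peeling builds every multiple of d from
   the generators other than m, except the exceptional vectors
   (x, 1, 0, ..., 0) for d > 2, resp. (odd, odd, 0, ..., 0) for d = 2,
   provided each peeled vector differs from m and leaves a non-exceptional
   remainder. Conversely, the generators other than m supported on the
   first two coordinates have second coordinate 0 or at least 2 (d > 2),
   resp. both coordinates even (d = 2), so no sum of them is exceptional. *)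

Set Implicit Arguments.
Unset Strict Implicit.
Unset Printing Implicit Defensive.

Section Vectors.
Variable n : nat.
Implicit Types (a b c g : vecN n) (G Q : vecN n -> Prop).

Definition vle a b := forall i, a i <= b i.
Definition vsub a b : vecN n := [ffun i => a i - b i].
Definition vunit (k : 'I_n) (t : nat) : vecN n :=
  [ffun i => if i == k then t else 0].
Definition vset a (k : 'I_n) (t : nat) : vecN n :=
  [ffun i => if i == k then t else a i].

Lemma vnorm1_add a b : vnorm1 n (vadd n a b) = vnorm1 n a + vnorm1 n b.
Proof. by rewrite /vnorm1 -big_split; apply: eq_bigr => i _; rewrite ffunE. Qed.

Lemma vnorm1_zero : vnorm1 n (vzero n) = 0.
Proof. by rewrite /vnorm1 big1 // => i _; rewrite ffunE. Qed.

Lemma vnorm1_unit k t : vnorm1 n (vunit k t) = t.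
Proof.
rewrite /vnorm1 (bigD1 k) //= ffunE eqxx big1 ?addn0 // => i /negbTE.
by rewrite ffunE => ->.
Qed.

Lemma vnorm1_set a k t : vnorm1 n (vset a k t) + a k = vnorm1 n a + t.
Proof.
rewrite /vnorm1 (bigD1 k) //= [in RHS](bigD1 k) //= ffunE eqxx.
rewrite (eq_bigr a) => [|i /negbTE]; last by rewrite ffunE => ->.
by rewrite addnC [t + _]addnC addnA.
Qed.

Lemma leq_coord_vnorm1 a i : a i <= vnorm1 n a.
Proof. by rewrite /vnorm1 (bigD1 i) //= leq_addr. Qed.

Lemma vnorm1_eq0 a : vnorm1 n a = 0 -> a = vzero n.
Proof.
move=> a0; apply/ffunP => i; rewrite ffunE.
by apply/eqP; rewrite -leqn0 -a0 leq_coord_vnorm1.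
Qed.

Lemma vadd_subKC a b : vle b a -> vadd n b (vsub a b) = a.
Proof. by move=> ba; apply/ffunP => i; rewrite !ffunE subnKC. Qed.

Lemma vnorm1_sub a b : vle b a -> vnorm1 n (vsub a b) = vnorm1 n a - vnorm1 n b.
Proof. by move/vadd_subKC=> {2}<-; rewrite vnorm1_add addKn. Qed.

Lemma vle_between c a k : vle c a -> vnorm1 n c <= k <= vnorm1 n a ->
  exists g, [/\ vle c g, vle g a & vnorm1 n g = k].
Proof.
move=> ca /andP[ck ka]; rewrite -(subnKC ck) in ka *.
elim: (k - _) ka => [|j IHj] ka; first by exists c; rewrite addn0; split=> // i.
have [|g [cg ga ng]] := IHj; first lia.
case: (pickP (fun i => g i < a i)) => [i gai | ag].
  exists (vadd n g (vunit i 1)); split.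
  - by move=> x; rewrite !ffunE; apply: leq_trans (cg x) (leq_addr _ _).
  - by move=> x; rewrite !ffunE; case: eqP => [->|_]; rewrite ?addn1 ?addn0.
  - by rewrite vnorm1_add vnorm1_unit ng addn1 addnS.
have: vnorm1 n a <= vnorm1 n g.
  by apply: leq_sum => i _; rewrite leqNgt ag.
lia.
Qed.

Lemma in_semigroup_dvd d G a : (forall g, G g -> d %| vnorm1 n g) ->
  in_semigroup n G a -> d %| vnorm1 n a.
Proof.
move=> Gd; elim=> [|g b Gg _ IHb]; first by rewrite vnorm1_zero.
by rewrite vnorm1_add dvdn_add // Gd.
Qed.

Lemma in_semigroup_peel d G Q : 0 < d ->
  (forall a, d %| vnorm1 n a -> d <= vnorm1 n a -> Q a ->
     exists g, [/\ G g, vle g a, vnorm1 n g = d & Q (vsub a g)]) ->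
  forall a, d %| vnorm1 n a -> Q a -> in_semigroup n G a.
Proof.
move=> d0 peel a; have [k] := ubnP (vnorm1 n a).
elim: k a => // k IHk a ak da Qa.
have [/vnorm1_eq0 -> | a0] := posnP (vnorm1 n a); first exact: sg_zero.
have [g [Gg ga gd Qag]] := peel a da (dvdn_leq a0 da) Qa.
rewrite -(vadd_subKC ga); apply: sg_add => //.
apply: IHk Qag; rewrite vnorm1_sub // gd; first lia.
by rewrite dvdn_sub.
Qed.

Lemma A_ndP d a : 0 < d -> A_nd n d a <-> d %| vnorm1 n a.
Proof.
move=> d0; split; first by apply: in_semigroup_dvd => g ->.
move=> da; apply: (@in_semigroup_peel d _ (fun=> True)) => // {da}a _ ad _.
have [||g [_ ga gd]] := @vle_between (vzero n) a d.
- by move=> i; rewrite ffunE.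
- by rewrite vnorm1_zero ad.
- by exists g.
Qed.

Lemma A_nd_setminus_A_ndm d m a (exceptional : bool) : 0 < d ->
  (A_ndm n d m a <-> d %| vnorm1 n a /\ ~~ exceptional) ->
  (A_nd n d a /\ ~ A_ndm n d m a <-> d %| vnorm1 n a /\ exceptional).
Proof.
move=> d0 A_ndmP; rewrite (A_ndP _ d0) A_ndmP {A_ndmP}.
by case: exceptional; split=> -[da ex]; split=> //; [case | case: ex].
Qed.

End Vectors.

Section FirstTwoCoordinates.
Variables (n : nat) (hn : 1 < n).
Implicit Types a b g : vecN n.

Let i0 : 'I_n := Ordinal (ltnW hn).
Let i1 : 'I_n := Ordinal hn.

Definition supp2 a := [forall i : 'I_n, (1 < i) ==> (a i == 0)].

Lemma ord_gt1_neq (k : 'I_n) : 1 < k -> (k == i0) = false /\ (k == i1) = false.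
Proof. by rewrite -!(inj_eq val_inj) /=; case: (nat_of_ord k) => [|[]]. Qed.

Lemma vec2_i0 x y : vec2 n x y i0 = x.
Proof. by rewrite ffunE. Qed.

Lemma vec2_i1 x y : vec2 n x y i1 = y.
Proof. by rewrite ffunE. Qed.

Lemma vec2_gt1 x y (k : 'I_n) : 1 < k -> vec2 n x y k = 0.
Proof. by rewrite ffunE; case: (nat_of_ord k) => [|[]]. Qed.

Lemma supp2_vec2 x y : supp2 (vec2 n x y).
Proof. by apply/forallP => i; apply/implyP => /(vec2_gt1 x y) ->. Qed.

Lemma supp2_eq a : supp2 a -> a = vec2 n (a i0) (a i1).
Proof.
move=> /forallP a2; apply/ffunP => -[[|[|k]] ik]; rewrite ffunE /=.
- by congr (a _); apply: val_inj.
- by congr (a _); apply: val_inj.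
- exact/eqP/(implyP (a2 (Ordinal ik))).
Qed.

Lemma vnorm1_vec2 x y : vnorm1 n (vec2 n x y) = x + y.
Proof.
rewrite /vnorm1 (bigD1 i0) // (bigD1 i1) //= !ffunE /= big1 ?addn0 // => i.
by rewrite ffunE -!(inj_eq val_inj) /=; case: (nat_of_ord i) => [|[]].
Qed.

Lemma vnorm1_supp2 a : supp2 a -> vnorm1 n a = a i0 + a i1.
Proof. by move/supp2_eq=> {1}->; rewrite vnorm1_vec2. Qed.

Lemma supp2_vadd g b : supp2 (vadd n g b) -> supp2 g /\ supp2 b.
Proof.
move=> /forallP gb; split; apply/forallP => i; apply/implyP => lt1i.
all: by have := implyP (gb i) lt1i; rewrite ffunE addn_eq0 => /andP[].
Qed.

Lemma supp2Pn a : ~~ supp2 a -> exists2 k : 'I_n, 1 < k & 0 < a k.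
Proof. by move=> /forallPn[k]; rewrite negb_imply -lt0n => /andP[]; exists k. Qed.

(* Vectors outside A_{n,d,m}, up to the divisibility of their norm. *)
Definition exceptional_gt2 a := supp2 a && (a i1 == 1).
Definition exceptional2 a := [&& supp2 a, odd (a i0) & odd (a i1)].

Lemma A_ndm_second_neq1 d a : A_ndm n d (vec2 n d.-1 1) a ->
  supp2 a -> a i1 != 1.
Proof.
elim=> [_|g b [gd gm] _ IHb /supp2_vadd[g2 b2]]; first by rewrite ffunE.
have := vnorm1_supp2 g2; rewrite gd ffunE => gd'.
case: (g i1) gd' (supp2_eq g2) => [|[|k]] gd' g_eq; rewrite ?add0n ?IHb //.
by case: gm; rewrite g_eq; congr vec2; lia.
Qed.

Lemma A_ndm2_even a : A_ndm n 2 (vec2 n 1 1) a ->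
  supp2 a -> ~~ odd (a i0) && ~~ odd (a i1).
Proof.
elim=> [_|g b [gd gm] _ IHb /supp2_vadd[g2 b2]]; first by rewrite !ffunE.
have := vnorm1_supp2 g2; rewrite gd => gd'.
have g_even : ~~ odd (g i0) && ~~ odd (g i1).
  case: (g i0) gd' (supp2_eq g2) => [|[|[|k]]] gd' g_eq; try by rewrite /=; lia.
  by case: gm; rewrite g_eq; congr vec2; lia.
rewrite !ffunE !oddD; move: g_even (IHb b2).
by case: (odd (g i0)); case: (odd (g i1)); case: (odd (b i0)); case: (odd (b i1)).
Qed.

Lemma peel_gt2 d a : 2 < d -> d %| vnorm1 n a -> d <= vnorm1 n a ->
  ~~ exceptional_gt2 a -> exists g, [/\ vle g a, vnorm1 n g = d,
    g <> vec2 n d.-1 1 & ~~ exceptional_gt2 (vsub a g)].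
Proof.
move=> d2 da ad not_exc.
have [a1 | a1] := eqVneq (a i1) 1.
  have [k k1 ak] : exists2 k : 'I_n, 1 < k & 0 < a k.
    by apply: supp2Pn; apply: contra not_exc => a2; rewrite /exceptional_gt2 a2 a1.
  have [_ k1'] := ord_gt1_neq k1.
  pose c := vadd n (vunit i1 1) (vunit k 1).
  have [||g [cg ga gd]] := @vle_between n c a d.
  - move=> i; rewrite !ffunE; case: eqP => [->|_]; first by rewrite eq_sym k1' a1.
    by case: eqP => [->|]; rewrite ?ak.
  - by rewrite vnorm1_add !vnorm1_unit ad; lia.
  have gi1 : g i1 = 1.
    by have := cg i1; have := ga i1; rewrite !ffunE eqxx eq_sym k1' a1; lia.
  exists g; split=> //.
    by move=> gm; have := cg k; rewrite gm vec2_gt1 // !ffunE k1' eqxx.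
  by rewrite /exceptional_gt2 ffunE gi1 a1 andbF.
have [t [ta td dt t1 at1]] : exists t, [/\ t <= a i1, t <= d,
    d + a i1 <= vnorm1 n a + t, t != 1 & a i1 - t != 1].
  have ai1 := leq_coord_vnorm1 a i1.
  have [le_ad | lt_da] := leqP (a i1) d.
    by exists (a i1); split; rewrite ?subnn //; lia.
  have [e | ne] := eqVneq (a i1) d.+1.
    have : d.*2 <= vnorm1 n a by move: ai1; have [[|[|s]] ->] := dvdnP da; rewrite e; nia.
    by exists d.-1; split; apply/eqP || idtac; lia.
  by exists d; split; apply/eqP || idtac; lia.
have [||g [cg ga' gd]] := @vle_between n (vunit i1 t) (vset a i1 t) d.
- by move=> i; rewrite !ffunE; case: eqP.
- by have := vnorm1_set a i1 t; rewrite vnorm1_unit td; lia.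
have ga : vle g a.
  by move=> i; apply: leq_trans (ga' i) _; rewrite ffunE; case: eqP => [->|].
have git : g i1 = t by have := cg i1; have := ga' i1; rewrite !ffunE eqxx; lia.
exists g; split=> //.
  by move=> gm; rewrite gm vec2_i1 in git; rewrite -git in t1.
by rewrite /exceptional_gt2 ffunE git (negbTE at1) andbF.
Qed.

Lemma vec2_11 i : i \in [:: i0; i1] -> vec2 n 1 1 i = 1.
Proof. by rewrite !inE => /orP[] /eqP ->; rewrite ffunE. Qed.

Lemma exceptional2_odd b i : i \in [:: i0; i1] -> exceptional2 b -> odd (b i).
Proof. by rewrite !inE => /orP[] /eqP -> /and3P[]. Qed.

Lemma peel2 a : 2 <= vnorm1 n a -> ~~ exceptional2 a ->
  exists g, [/\ vle g a, vnorm1 n g = 2, g <> vec2 n 1 1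
    & ~~ exceptional2 (vsub a g)].
Proof.
move=> a2 not_exc.
have peel_at i g : i \in [:: i0; i1] -> g <> vec2 n 1 1 -> vle g a ->
    vnorm1 n g = 2 -> ~~ odd (a i - g i) ->
  exists g, [/\ vle g a, vnorm1 n g = 2, g <> vec2 n 1 1
    & ~~ exceptional2 (vsub a g)].
  move=> i01 gm ga gd ev; exists g; split=> //.
  by apply: contra ev => /(exceptional2_odd i01); rewrite ffunE.
have [/andP[o0 o1] | /nandP ev] := boolP (odd (a i0) && odd (a i1)).
  have [k k1 ak] : exists2 k : 'I_n, 1 < k & 0 < a k.
    by apply: supp2Pn; apply: contra not_exc => a2'; rewrite /exceptional2 a2' o0 o1.
  have [k0 k1'] := ord_gt1_neq k1.
  apply: (peel_at i0 (vadd n (vunit i0 1) (vunit k 1))).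
  - by rewrite inE eqxx.
  - by move/(congr1 (fun f : vecN n => f k)); rewrite vec2_gt1 // !ffunE k0 eqxx.
  - move=> i; rewrite !ffunE; case: eqP => [->|_].
      by rewrite eq_sym k0; case: (a i0) o0.
    by case: eqP => [->|].
  - by rewrite vnorm1_add !vnorm1_unit.
  - by rewrite !ffunE eqxx eq_sym k0 oddB ?o0 //; case: (a i0) o0.
have [i i01 ev_i] : exists2 i, i \in [:: i0; i1] & ~~ odd (a i).
  by case: ev; [exists i0 | exists i1]; rewrite ?inE ?eqxx ?orbT.
have [ai0 | ai_pos] := posnP (a i).
  have [||g [_ ga gd]] := @vle_between n (vzero n) a 2.
  - by move=> j; rewrite ffunE.
  - by rewrite vnorm1_zero a2.
  have gi : g i = 0 by apply/eqP; rewrite -leqn0 -ai0 ga.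
  apply: (peel_at i g) => //; last by rewrite ai0.
  by move/(congr1 (fun f : vecN n => f i)); rewrite gi vec2_11.
have ai2 : 1 < a i by case: (a i) ai_pos ev_i => [|[]].
apply: (peel_at i (vunit i 2)) => //.
- by move/(congr1 (fun f : vecN n => f i)); rewrite vec2_11 // ffunE eqxx.
- by move=> j; rewrite ffunE; case: eqP => [->|].
- exact: vnorm1_unit.
- by rewrite ffunE eqxx oddB // (negbTE ev_i).
Qed.

Lemma A_ndm_gt2P d a : 2 < d ->
  A_ndm n d (vec2 n d.-1 1) a <-> d %| vnorm1 n a /\ ~~ exceptional_gt2 a.
Proof.
move=> d2; split=> [Aa | [da not_exc]].
  split; first by apply: in_semigroup_dvd Aa => g [->].
  by apply/andP=> -[a2 /eqP a1]; have := A_ndm_second_neq1 Aa a2; rewrite a1.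
apply: (@in_semigroup_peel _ d _ (fun b => ~~ exceptional_gt2 b)) da not_exc.
  exact: ltnW (ltnW d2).
move=> b db bd /(peel_gt2 d2 db bd)[g [ga gd gm ex]].
by exists g.
Qed.

Lemma A_ndm2P a :
  A_ndm n 2 (vec2 n 1 1) a <-> 2 %| vnorm1 n a /\ ~~ exceptional2 a.
Proof.
split=> [Aa | [da not_exc]].
  split; first by apply: in_semigroup_dvd Aa => g [->].
  apply/and3P=> -[a2 o0 o1]; have := A_ndm2_even Aa a2.
  by rewrite o0 o1.
apply: (@in_semigroup_peel _ 2 _ (fun b => ~~ exceptional2 b)) da not_exc => //.
by move=> b _ b2 /(peel2 b2)[g [ga gd gm ex]]; exists g.
Qed.

Lemma exceptional_gt2_vec2 d a : 2 < d ->
  d %| vnorm1 n a /\ exceptional_gt2 a <->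
  exists s, 1 <= s /\ a = vec2 n (d * s - 1) 1.
Proof.
move=> d2; split=> [[da /andP[a2 /eqP a1]] | [s [s1 ->]]].
  have [s es] := dvdnP da; rewrite (vnorm1_supp2 a2) a1 mulnC in es.
  exists s; split; first by case: s es => [|s]; rewrite ?muln0 ?addn1.
  by rewrite (supp2_eq a2) a1 -es addnK.
have ds : 0 < d * s by rewrite muln_gt0 s1 andbT; apply: ltnW (ltnW d2).
by rewrite vnorm1_vec2 subnK // dvdn_mulr //= /exceptional_gt2 supp2_vec2 vec2_i1.
Qed.

Lemma exceptional2_vec2 a :
  2 %| vnorm1 n a /\ exceptional2 a <->
  exists s t, a = vec2 n (2 * s + 1) (2 * t + 1).
Proof.
split=> [[_ /and3P[a2 o0 o1]] | [s [t ->]]].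
  exists (a i0)./2, (a i1)./2; rewrite {1}(supp2_eq a2).
  rewrite -{1}(odd_double_half (a i0)) -{1}(odd_double_half (a i1)) o0 o1.
  by rewrite -!muln2 !addn1 !(mulnC 2).
rewrite vnorm1_vec2 /exceptional2 supp2_vec2 vec2_i0 vec2_i1.
by rewrite dvdn2 !oddD /= !addbF !addbb.
Qed.

End FirstTwoCoordinates.

Theorem lemma2p18 (n d : nat) (hn : 2 <= n) (hd : 2 <= d) (a : vecN n) :
  (A_nd n d a /\ ~ A_ndm n d (vec2 n d.-1 1) a) <->
  (if d == 2
   then exists s t : nat, a = vec2 n (2 * s + 1) (2 * t + 1)
   else exists s : nat, 1 <= s /\ a = vec2 n (d * s - 1) 1).
Proof.
case: ifP => [/eqP d2 | /negbT d_neq2].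
  subst d; apply: iff_trans (exceptional2_vec2 hn a).
  exact: A_nd_setminus_A_ndm (A_ndm2P hn a).
have d2 : 2 < d by rewrite ltn_neqAle eq_sym d_neq2.
apply: iff_trans (exceptional_gt2_vec2 hn a d2).
exact: A_nd_setminus_A_ndm (ltnW (ltnW d2)) (A_ndm_gt2P hn a d2).
Qed.
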